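(* Let $A$ be a strongly AUF algebra, let $G$ be a projective generator of $\mathrm{Coh}_{\mathrm L}(A)$, and let $B=\mathrm{End}_{A,-}(G)^{\mathrm{op}}$, so that $G$ is an $A$-$B$ bimodule. Then the map $A\to\mathrm{End}^0_{-,B}(G)$ sending each $a\in A$ to the operator of left multiplication by $a$ on $G$ is a linear isomorphism.
   Context: All algebras are associative $\mathbb C$-algebras, not necessarily unital. An idempotent is $e$ with $e^2=e$. An algebra $A$ is AUF if there is a family $(e_i)_{i\in\mathfrak I}$ of mutually orthogonal idempotents with $\dim e_iAe_j<\infty$ and $A=\sum_{i,j}e_iAe_j$. A left $A$-module $M$ is quasicoherent if $\xi\in A\xi$ for all $\xi\in M$, coherent if moreover finitely generated; $\mathrm{Coh}_{\mathrm L}(A)$ is the category of coherent left $A$-modules. Irreducible means nonzero with no nonzero proper submodules. An idempotent $e$ is generating if every irreducible quasicoherent left $A$-module is a quotient of $Ae$; $A$ is strongly AUF if it is AUF and has a generating idempotent. A projective generator of $\mathrm{Coh}_{\mathrm L}(A)$ is an object projective as a left $A$-module such that every object of $\mathrm{Coh}_{\mathrm L}(A)$ is a quotient of a finite direct sum of copies of it. $B=\mathrm{End}_{A,-}(G)^{\mathrm{op}}$ acts on the right of $G$ by $\xi\cdot T=T(\xi)$. For a quasicoherent left $A$-module $M$: $M^\vee$ is the space of linear functionals $\varphi$ on $M$ for which there is an idempotent $e\in A$ with $\varphi(e\eta)=\varphi(\eta)$ for all $\eta\in M$; $\mathrm{End}^0(M)\subset\mathrm{End}(M)$ is the span of the operators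 $\eta\mapsto\varphi(\eta)\xi$ with $\xi\in M$, $\varphi\in M^\vee$; if $M$ carries a right action of an algebra $B$ commuting with $A$, $\mathrm{End}^0_{-,B}(M)=\{T\in\mathrm{End}^0(M):T(\xi b)=T(\xi)b\ \forall\xi,b\}$. *)

(* The field of complex numbers is rendered as
   [complex R] (= R[i], from mathcomp-real-closed) for [R : realType]
   (any realType is a model of the reals). *)
From HB Require Import structures.
From mathcomp Require Import all_boot all_order all_algebra.
From mathcomp Require Import reals.
From mathcomp Require Export complex.
Set Implicit Arguments. Unset Strict Implicit. Unset Printing Implicit Defensive.
Import GRing.Theory.
Local Open Scope ring_scope.

Section AUFDefs.
Variable K : fieldType.

Definition lin (U V : lmodType K) (f : U -> V) : Prop :=
  forall (c : K) (x y : U), f (c *: x + y) = c *: f x + f y.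

Definition lin_fun (U : lmodType K) (f : U -> K) : Prop :=
  forall (c : K) (x y : U), f (c *: x + y) = c * f x + f y.

Variable A : lmodType K.
Variable mul : A -> A -> A.

(* associative (not necessarily unital) K-algebra structure on A *)
Definition nu_alg : Prop :=
  (forall a b c, mul a (mul b c) = mul (mul a b) c) /\
  (forall a, lin (mul a)) /\ (forall b, lin (fun a => mul a b)).

Definition idempotent (e : A) : Prop := mul e e = e.

Definition AUF : Prop :=
  exists (I : Type) (e : I -> A),
    (forall i, idempotent (e i)) /\
    (forall i j, i <> j -> mul (e i) (e j) = 0) /\
    (forall i j, exists s : seq A,
        (forall k, (k < size s)%N -> exists a, nth 0 s k = mul (mul (e i) a) (e j)) /\
        (forall a, exists cs : seq K,
            mul (mul (e i) a) (e j) = \sum_(k < size s) nth 0 cs k *: nth 0 s k)) /\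
    (forall a, exists ts : seq (I * I * A),
        a = \sum_(t <- ts) mul (mul (e t.1.1) t.2) (e t.1.2)).

Definition is_lmod (M : lmodType K) (act : A -> M -> M) : Prop :=
  (forall a, lin (act a)) /\ (forall m, lin (fun a => act a m)) /\
  (forall a b m, act (mul a b) m = act a (act b m)).

Definition modhom (M N : lmodType K) (actM : A -> M -> M) (actN : A -> N -> N)
  (f : M -> N) : Prop :=
  lin f /\ forall a m, f (actM a m) = actN a (f m).

Definition quasicoherent (M : lmodType K) (act : A -> M -> M) : Prop :=
  forall m, exists a, act a m = m.

Definition fin_gen (M : lmodType K) (act : A -> M -> M) : Prop :=
  exists xs : seq M, forall m, exists (as_ : seq A) (cs : seq K),
    m = \sum_(k < size xs) (act (nth 0 as_ k) (nth 0 xs k) + nth 0 cs k *: nth 0 xs k).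

Definition coherent (M : lmodType K) (act : A -> M -> M) : Prop :=
  quasicoherent act /\ fin_gen act.

Definition submodule (M : lmodType K) (act : A -> M -> M) (S : M -> Prop) : Prop :=
  S 0 /\ (forall c x y, S x -> S y -> S (c *: x + y)) /\
  (forall a x, S x -> S (act a x)).

Definition irreducible (M : lmodType K) (act : A -> M -> M) : Prop :=
  (exists m : M, m <> 0) /\
  forall S, submodule act S -> (forall m, S m -> m = 0) \/ (forall m, S m).

(* e is generating: every irreducible quasicoherent left module is a quotient
   of the left ideal A e (a surjective A-module map A e ->> M, given by a
   linear map on A whose restriction to A e is A-linear and onto). *)
Definition generating_idem (e : A) : Prop :=
  idempotent e /\
  forall (M : lmodType K) (act : A -> M -> M), is_lmod act ->
    quasicoherent act -> irreducible act ->
    exists f : A -> M, lin f /\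
      (forall b a, f (mul b (mul a e)) = act b (f (mul a e))) /\
      (forall m, exists a, f (mul a e) = m).

Definition strongly_AUF : Prop := AUF /\ exists e, generating_idem e.

Definition projective (G : lmodType K) (actG : A -> G -> G) : Prop :=
  forall (M N : lmodType K) (actM : A -> M -> M) (actN : A -> N -> N),
    is_lmod actM -> is_lmod actN ->
    forall p : M -> N, modhom actM actN p -> (forall n, exists m, p m = n) ->
    forall f : G -> N, modhom actG actN f ->
    exists g : G -> M, modhom actG actM g /\ forall x, p (g x) = f x.

Definition proj_generator (G : lmodType K) (actG : A -> G -> G) : Prop :=
  coherent actG /\ projective actG /\
  forall (M : lmodType K) (act : A -> M -> M), is_lmod act -> coherent act ->
    exists fs : seq (G -> M),
      (forall k, (k < size fs)%N -> modhom actG act (nth (fun _ => 0) fs k)) /\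
      (forall m, exists gs : seq G,
          m = \sum_(k < size fs) nth (fun _ => 0) fs k (nth 0 gs k)).

Definition in_dual (M : lmodType K) (act : A -> M -> M) (phi : M -> K) : Prop :=
  lin_fun phi /\ exists e, idempotent e /\ forall eta, phi (act e eta) = phi eta.

Definition in_End0 (M : lmodType K) (act : A -> M -> M) (T : M -> M) : Prop :=
  lin T /\
  exists (phis : seq (M -> K)) (xis : seq M),
    size phis = size xis /\
    (forall k, (k < size phis)%N -> in_dual act (nth (fun _ => 0) phis k)) /\
    (forall eta, T eta = \sum_(k < size phis) nth (fun _ => 0) phis k eta *: nth 0 xis k).

(* End^0_{-,B}(G) with B = End_{A,-}(G)^op acting on the right by xi.S = S xi *)
Definition in_End0_B (G : lmodType K) (actG : A -> G -> G) (T : G -> G) : Prop :=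
  in_End0 actG T /\
  forall S : G -> G, modhom actG actG S -> forall xi, T (S xi) = S (T xi).

End AUFDefs.

From Pilot Require Import Defs.
From HB Require Import structures.
From mathcomp Require Import all_boot all_order all_algebra.
From mathcomp Require Import reals complex boolp.
Set Implicit Arguments. Unset Strict Implicit. Unset Printing Implicit Defensive.
Import GRing.Theory.
Local Open Scope ring_scope.

(* Everything rests on local units: finitely many elements of an AUF algebra
   have a common two-sided unit F, an idempotent which is a finite sum of the
   e_i, and the corner F A F is finite-dimensional.  As G is finitely
   generated, F G is then finite-dimensional, so left multiplication by
   a = a F factors through F G and has finite rank, with coordinate functionals
   invariant under F: it lies in End^0(G).
   The left ideal A F is coherent, hence a quotient of some G^n, which gives
   F = sum_k f_k(g_k) with A-linear f_k : G -> A.  If a annihilates G then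
   a = a F = sum_k f_k(a g_k) = 0.  If T lies in End^0_{-,B}(G), choose F with
   T(F xi) = T xi; as each g |-> f_k(g) xi is A-linear,
   T xi = sum_k T(f_k(g_k) xi) = (sum_k f_k(T g_k)) xi. *)

Section LinearMaps.
Variables (K : fieldType) (U V : lmodType K) (f : U -> V).
Hypothesis f_lin : lin f.

Let f_linear : {linear U -> V} := HB.pack f (GRing.isLinear.Build K U V *:%R f f_lin).

Lemma lin0 : f 0 = 0. Proof. exact: (raddf0 f_linear). Qed.
Lemma linD x y : f (x + y) = f x + f y. Proof. exact: (raddfD f_linear). Qed.
Lemma linB x y : f (x - y) = f x - f y. Proof. exact: (raddfB f_linear). Qed.
Lemma linZ c x : f (c *: x) = c *: f x. Proof. exact: (linearZ_LR f_linear). Qed.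

Lemma lin_sum (I : Type) (r : seq I) (P : pred I) (F : I -> U) :
  f (\sum_(i <- r | P i) F i) = \sum_(i <- r | P i) f (F i).
Proof. exact: (raddf_sum f_linear). Qed.

End LinearMaps.

Section Span.
Variables (K : fieldType) (V : lmodType K).
Implicit Types (S W : seq V) (v w : V).

Definition inspan S v := exists l : seq K, v = \sum_(k < size S) l`_k *: S`_k.

Lemma inspan0 S : inspan S 0.
Proof. by exists [::]; rewrite big1 // => k _; rewrite nth_nil scale0r. Qed.

Lemma inspanD S v w : inspan S v -> inspan S w -> inspan S (v + w).
Proof.
move=> [l ->] [l' ->]; exists (mkseq (fun k => l`_k + l'`_k) (size S)).
by rewrite -big_split; apply: eq_bigr => k _; rewrite nth_mkseq // scalerDl.
Qed.

Lemma inspanZ S c v : inspan S v -> inspan S (c *: v).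
Proof.
move=> [l ->]; exists (mkseq (fun k => c * l`_k) (size S)).
by rewrite scaler_sumr; apply: eq_bigr => k _; rewrite nth_mkseq // scalerA.
Qed.

Lemma inspanB S v w : inspan S v -> inspan S w -> inspan S (v - w).
Proof. by move=> Sv Sw; apply: inspanD => //; rewrite -scaleN1r; apply: inspanZ. Qed.

Lemma inspan_sum S (I : Type) (r : seq I) (P : pred I) (F : I -> V) :
  (forall i, P i -> inspan S (F i)) -> inspan S (\sum_(i <- r | P i) F i).
Proof. exact: (big_ind (inspan S) (inspan0 S) (@inspanD S)). Qed.

Lemma inspan_mem S v : v \in S -> inspan S v.
Proof.
move=> vS; have k_lt : (index v S < size S)%N by rewrite index_mem.
exists (mkseq (fun k => (k == index v S)%:R) (size S)).
rewrite (bigD1 (Ordinal k_lt)) //= nth_mkseq // eqxx scale1r nth_index //.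
rewrite big1 ?addr0 // => k k_ne; rewrite nth_mkseq //.
by rewrite -[k == _ :> nat]/(k == Ordinal k_lt) (negbTE k_ne) scale0r.
Qed.

Lemma inspan_subset S S' v : {subset S <= S'} -> inspan S v -> inspan S' v.
Proof.
move=> sub [l ->]; apply: inspan_sum => k _; apply: inspanZ.
by apply/inspan_mem/sub/mem_nth.
Qed.

Lemma inspan_consE S w v : inspan (w :: S) v -> exists t, inspan S (v - t *: w).
Proof.
move=> [l ->]; exists l`_0; rewrite big_ord_recl /= addrAC subrr add0r.
by exists (behead l); apply: eq_bigr => k _; rewrite -nth_behead.
Qed.

Lemma lin_into_span_decomp (U : lmodType K) (T : U -> V) W :
  lin T -> (forall u, inspan W (T u)) ->
  exists psis : seq (U -> K), (forall k, lin_fun (nth (fun _ => 0) psis k)) /\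
    forall u, T u = \sum_(k < size W) nth (fun _ => 0) psis k u *: W`_k.
Proof.
elim: W T => [|w W IH] T T_lin TW.
  exists [::]; split=> [k c x y | u]; first by rewrite nth_nil mulr0 addr0.
  by have [l ->] := TW u; rewrite !big_ord0.
have [t Tt] := choice (fun u => inspan_consE (TW u)).
have [w_in | w_out] := pselect (inspan W w).
  have TW' u : inspan W (T u).
    by rewrite -(subrK (t u *: w) (T u)); apply: inspanD (Tt u) (inspanZ _ w_in).
  have [psis [psis_lin T_psis]] := IH T T_lin TW'.
  exists ((fun _ => 0) :: psis); split=> [[|k] | u] /=.
  - by move=> c x y /=; rewrite mulr0 addr0.
  - exact: psis_lin.
  - by rewrite big_ord_recl /= scale0r add0r T_psis.
(* As [w] is not in the span of [W], the coefficient of [w] in [T u] is unique,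
   hence linear in [u]; peel it off and recurse. *)
have t_unique u s : inspan W (T u - s *: w) -> s = t u.
  move=> Ws; have := inspanB Ws (Tt u).
  have -> : T u - s *: w - (T u - t u *: w) = (t u - s) *: w.
    by rewrite scalerBl opprB addrC addrA addrNK.
  case: (eqVneq s (t u)) => // ne /(inspanZ (t u - s)^-1).
  by rewrite scalerA mulVf ?subr_eq0 1?eq_sym // scale1r.
have t_lin : lin_fun t.
  move=> c x y; symmetry; apply: t_unique; rewrite T_lin.
  have -> : c *: T x + T y - (c * t x + t y) *: w
          = c *: (T x - t x *: w) + (T y - t y *: w).
    by rewrite scalerDl -scalerA scalerBr opprD addrACA.
  by apply: inspanD; first apply: inspanZ.
pose T' u := T u - t u *: w.
have T'_lin : lin T'.
  by move=> c x y; rewrite /T' T_lin t_lin scalerDl -scalerA scalerBr opprD addrACA.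
have [psis [psis_lin T'_psis]] := IH T' T'_lin Tt.
exists (t :: psis); split=> [[|k] | u] //=.
by rewrite big_ord_recl /= -T'_psis /T' addrC subrK.
Qed.

End Span.

Lemma inspan_map (K : fieldType) (U V : lmodType K) (f : U -> V) (S : seq U) u :
  lin f -> inspan S u -> inspan (map f S) (f u).
Proof.
move=> f_lin [l ->]; exists l; rewrite (lin_sum f_lin) size_map.
by apply: eq_bigr => k _; rewrite (linZ f_lin) (nth_map 0).
Qed.

Section Algebra.
Variables (K : fieldType) (A : lmodType K) (mul : A -> A -> A).
Hypothesis mul_alg : nu_alg mul.

Lemma mulA a b c : mul a (mul b c) = mul (mul a b) c.
Proof. by case: mul_alg => assoc _; apply: assoc. Qed.

Lemma mull_lin a : lin (mul a).
Proof. by case: mul_alg => _ [lin_l _]. Qed.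

Lemma mulr_lin b : lin (mul^~ b).
Proof. by case: mul_alg => _ [_ lin_r]. Qed.

Lemma mul_sumr a (I : Type) (r : seq I) (P : pred I) (F : I -> A) :
  mul a (\sum_(i <- r | P i) F i) = \sum_(i <- r | P i) mul a (F i).
Proof. exact: (lin_sum (mull_lin a) r P F). Qed.

Lemma mul_suml b (I : Type) (r : seq I) (P : pred I) (F : I -> A) :
  mul (\sum_(i <- r | P i) F i) b = \sum_(i <- r | P i) mul (F i) b.
Proof. exact: (lin_sum (mulr_lin b) r P F). Qed.

Definition local_unit (F x : A) := mul F x = x /\ mul x F = x.

Lemma local_unit0 F : local_unit F 0.
Proof. by split; [apply: lin0 (mull_lin F) | apply: lin0 (mulr_lin F)]. Qed.

Lemma local_unitD F x y : local_unit F x -> local_unit F y -> local_unit F (x + y).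
Proof.
move=> [Fx xF] [Fy yF].
by rewrite /local_unit (linD (mull_lin F)) (linD (mulr_lin F)) Fx xF Fy yF.
Qed.

Definition fd_local_units := forall xs : seq A, exists F,
  Defs.idempotent mul F /\ (forall x, x \in xs -> local_unit F x) /\
  exists S : seq A, forall z, inspan S (mul (mul F z) F).

End Algebra.

Section AUFLocalUnits.
Variables (K : fieldType) (A : lmodType K) (mul : A -> A -> A).
Hypothesis mul_alg : nu_alg mul.
Variables (I : eqType) (e : I -> A).
Hypothesis e_idem : forall i, Defs.idempotent mul (e i).
Hypothesis e_orth : forall i j, i != j -> mul (e i) (e j) = 0.
Hypothesis e_corner_fd :
  forall i j, exists s : seq A, forall a, inspan s (mul (mul (e i) a) (e j)).

Definition corner_sum (ts : seq (I * I * A)) : A :=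
  \sum_(t <- ts) mul (mul (e t.1.1) t.2) (e t.1.2).

Hypothesis e_span : forall a, exists ts, a = corner_sum ts.

Definition corner_indices (ts : seq (I * I * A)) : seq I :=
  [seq t.1.1 | t <- ts] ++ [seq t.1.2 | t <- ts].

Definition unit_of (D : seq I) : A := \sum_(i <- D) e i.

Lemma mul_unit_of_e D j : uniq D -> j \in D -> mul (unit_of D) (e j) = e j.
Proof.
move=> D_uniq jD; rewrite /unit_of mul_suml // (bigD1_seq j) //= e_idem.
by rewrite big1 ?addr0 // => i /e_orth.
Qed.

Lemma mul_e_unit_of D j : uniq D -> j \in D -> mul (e j) (unit_of D) = e j.
Proof.
move=> D_uniq jD; rewrite /unit_of mul_sumr // (bigD1_seq j) //= e_idem.
by rewrite big1 ?addr0 // => i; rewrite eq_sym => /e_orth.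
Qed.

Lemma unit_of_idem D : uniq D -> Defs.idempotent mul (unit_of D).
Proof.
move=> D_uniq; rewrite /Defs.idempotent {2}/unit_of mul_sumr //.
by apply: eq_big_seq => i iD; apply: mul_unit_of_e.
Qed.

Lemma corner_sum_local_unit D ts : uniq D -> {subset corner_indices ts <= D} ->
  local_unit mul (unit_of D) (corner_sum ts).
Proof.
move=> D_uniq ts_D; rewrite /corner_sum big_seq.
apply: (big_ind (local_unit mul (unit_of D))) => [|x y|t tts].
- exact: local_unit0.
- exact: local_unitD.
have iD : t.1.1 \in D by apply: ts_D; rewrite mem_cat (map_f (fun t => t.1.1)).
have jD : t.1.2 \in D by apply: ts_D; rewrite mem_cat (map_f (fun t => t.1.2)) ?orbT.
split; first by rewrite !(mulA mul_alg) mul_unit_of_e.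
by rewrite -(mulA mul_alg) mul_e_unit_of.
Qed.

Lemma unit_of_corner_fd D :
  exists S : seq A, forall z, inspan S (mul (mul (unit_of D) z) (unit_of D)).
Proof.
have [s sP] := choice (fun p : I * I => e_corner_fd p.1 p.2).
exists (flatten [seq s (i, j) | i <- D, j <- D]) => z.
rewrite /unit_of !mul_suml // big_seq; apply: inspan_sum => i iD.
rewrite mul_sumr // big_seq; apply: inspan_sum => j jD.
apply: inspan_subset (sP (i, j) z) => x x_s; apply/flattenP.
by exists (s (i, j)) => //; apply: (allpairs_f (fun i j => s (i, j))).
Qed.

Lemma orthogonal_idempotents_fd_local_units : fd_local_units mul.
Proof.
move=> xs.
have [D xs_D] : exists D : seq I, forall x, x \in xs ->
    exists ts, x = corner_sum ts /\ {subset corner_indices ts <= D}.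
  elim: xs => [|x xs [D xs_D]]; first by exists [::].
  have [ts x_ts] := e_span x; exists (corner_indices ts ++ D) => y.
  rewrite inE => /predU1P [-> | /xs_D [ts' [-> ts'_D]]].
    by exists ts; split=> // i i_ts; rewrite mem_cat i_ts.
  by exists ts'; split=> // i /ts'_D iD; rewrite mem_cat iD orbT.
exists (unit_of (undup D)); split; first exact/unit_of_idem/undup_uniq.
split; last exact: unit_of_corner_fd.
move=> x /xs_D [ts [-> ts_D]]; apply: corner_sum_local_unit; first exact: undup_uniq.
by move=> i /ts_D; rewrite mem_undup.
Qed.

End AUFLocalUnits.

Lemma AUF_fd_local_units (K : fieldType) (A : lmodType K) (mul : A -> A -> A) :
  nu_alg mul -> AUF mul -> fd_local_units mul.
Proof.
move=> mul_alg [I [e [e_idem [e_orth [e_fd e_span]]]]].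
apply: (@orthogonal_idempotents_fd_local_units _ _ _ mul_alg {classic I} e e_idem).
- by move=> i j /eqP; apply: e_orth.
- by move=> i j; have [s [_ s_span]] := e_fd i j; exists s.
- exact: e_span.
Qed.

Section LeftIdeal.
Variables (K : fieldType) (A : lmodType K) (mul : A -> A -> A).
Hypothesis mul_alg : nu_alg mul.
Variable F : A.
Hypothesis F_idem : Defs.idempotent mul F.
Hypothesis left_units : forall x, exists b, mul b x = x.

(* The left ideal [A F], i.e. the [x] with [x F = x]. *)
Definition lideal_pred : {pred A} := [pred x | mul x F == x].

Lemma lideal_pred_closed : submod_closed lideal_pred.
Proof.
split; first by rewrite inE (lin0 (mulr_lin mul_alg F)).
move=> c x y; rewrite !inE => /eqP xF /eqP yF.
by rewrite (mulr_lin mul_alg F) xF yF.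
Qed.

HB.instance Definition _ := GRing.isSubmodClosed.Build K A lideal_pred lideal_pred_closed.

Inductive lideal : Type := Lideal (x : A) of x \in lideal_pred.
Definition lideal_val (u : lideal) := let: Lideal x _ := u in x.
HB.instance Definition _ := [isSub for lideal_val].
HB.instance Definition _ := [Choice of lideal by <:].
HB.instance Definition _ := [SubChoice_isSubLmodule of lideal by <:].

Definition lideal_act (b : A) (x : lideal) : lideal := insubd x (mul b (val x)).

Lemma lideal_actE b x : val (lideal_act b x) = mul b (val x).
Proof.
rewrite /lideal_act val_insubd inE -(mulA mul_alg).
by have /[!inE] /eqP -> := valP x; rewrite eqxx.
Qed.

Lemma lideal_lmod : is_lmod mul lideal_act.
Proof.
split; [|split] => [a c x y | m c x y | a b m]; apply: val_inj => /=.
- by rewrite lideal_actE /= (mull_lin mul_alg) !lideal_actE.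
- by rewrite lideal_actE (mulr_lin mul_alg) /= !lideal_actE.
- by rewrite !lideal_actE (mulA mul_alg).
Qed.

Lemma lideal_coherent : coherent lideal_act.
Proof.
split=> [m | ].
  by have [b bm] := left_units (val m); exists b; apply: val_inj; rewrite lideal_actE.
have F_in : F \in lideal_pred by rewrite inE F_idem.
exists [:: Lideal F_in] => m; exists [:: val m], [::].
rewrite big_ord1 /= scale0r addr0; apply: val_inj; rewrite lideal_actE /=.
by have /[!inE] /eqP := valP m.
Qed.

Lemma proj_generator_covers_idempotent (G : lmodType K) (actG : A -> G -> G) :
  proj_generator mul actG ->
  exists fs : seq (G -> A),
    (forall k, (k < size fs)%N -> modhom actG mul (nth (fun _ => 0) fs k)) /\
    exists gs : seq G, F = \sum_(k < size fs) nth (fun _ => 0) fs k gs`_k.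
Proof.
move=> [_ [_ G_gen]]; have [fs [fs_hom fs_onto]] := G_gen _ _ lideal_lmod lideal_coherent.
exists [seq val \o f | f <- fs]; split=> [k | ].
  rewrite size_map => k_lt; rewrite (nth_map (fun _ => 0)) //.
  have [f_lin f_act] := fs_hom k k_lt.
  by split=> [c x y | b g] /=; rewrite ?f_lin ?f_act ?lideal_actE.
have F_in : F \in lideal_pred by rewrite inE F_idem.
have [gs F_gs] := fs_onto (Lideal F_in); exists gs.
rewrite -[F]/(val (Lideal F_in)) F_gs (lin_sum (f := val)) // size_map.
by apply: eq_bigr => k _; rewrite (nth_map (fun _ => 0)).
Qed.

End LeftIdeal.

Section Representation.
Variables (K : fieldType) (A : lmodType K) (mul : A -> A -> A).
Variables (G : lmodType K) (actG : A -> G -> G).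
Hypotheses (mul_alg : nu_alg mul) (units : fd_local_units mul).
Hypotheses (actG_lmod : is_lmod mul actG) (G_gen : proj_generator mul actG).

Lemma act_lin a : lin (actG a). Proof. by case: actG_lmod. Qed.
Lemma act_linl xi : lin (actG^~ xi). Proof. by case: actG_lmod => _ []. Qed.
Lemma act_mul a b xi : actG (mul a b) xi = actG a (actG b xi).
Proof. by case: actG_lmod => _ []. Qed.

Lemma left_units x : exists b, mul b x = x.
Proof.
have [F [_ [F_unit _]]] := units [:: x].
by exists F; case: (F_unit x (mem_head _ _)).
Qed.

(* Once [F] is a unit for local units [b x_k] of the generators [x_k] of [G],
   [F x_k = x_k], so [F (a x_k) = (F a F) x_k] lies in the span of the
   [s x_k] for [s] in a spanning list of [F A F]. *)
Lemma unit_image_fd (ys : seq A) : exists F, Defs.idempotent mul F /\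
  (forall y, y \in ys -> local_unit mul F y) /\
  exists W : seq G, forall eta, inspan W (actG F eta).
Proof.
case: G_gen => [[G_qc [xs xs_gen]] _]; have [b bP] := choice G_qc.
have [F [F_idem [F_unit [S FAF_S]]]] := units (ys ++ map b xs).
have F_xs x : x \in xs -> actG F x = x.
  move=> x_xs; have bx : b x \in ys ++ map b xs by rewrite mem_cat map_f ?orbT.
  by rewrite -{1}(bP x) -act_mul (F_unit _ bx).1.
exists F; split=> //; split=> [y y_ys | ]; first by apply: F_unit; rewrite mem_cat y_ys.
exists ([seq actG s x | s <- S, x <- xs] ++ xs) => eta.
have [as_ [cs ->]] := xs_gen eta.
rewrite (lin_sum (act_lin F)); apply: inspan_sum => k _.
have xk_xs : xs`_k \in xs by apply: mem_nth.
rewrite (linD (act_lin F)) (linZ (act_lin F)) (F_xs _ xk_xs); apply: inspanD; last first.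
  by apply/inspanZ/inspan_mem; rewrite mem_cat xk_xs orbT.
have -> : actG F (actG as_`_k xs`_k) = actG (mul (mul F as_`_k) F) xs`_k.
  by rewrite !act_mul (F_xs _ xk_xs).
apply: inspan_subset (inspan_map (act_linl xs`_k) (FAF_S as_`_k)).
by move=> _ /mapP [s s_S ->]; rewrite mem_cat allpairs_f.
Qed.

Lemma act_in_End0 a : in_End0 mul actG (actG a).
Proof.
split; first exact: act_lin.
have [F [F_idem [F_unit [W FW]]]] := unit_image_fd [:: a].
have [_ aF] := F_unit a (mem_head _ _).
have [psis [psis_lin F_psis]] := lin_into_span_decomp (act_lin F) FW.
pose phi k eta := nth (fun _ => 0) psis k (actG F eta).
exists (mkseq phi (size W)), (map (actG a) W); split; first by rewrite size_mkseq size_map.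
split=> [k | eta]; rewrite size_mkseq.
  move=> k_lt; rewrite nth_mkseq //; split.
    by move=> c x y; rewrite /phi (act_lin F) psis_lin.
  by exists F; split=> // eta; rewrite /phi -act_mul F_idem.
rewrite -{1}aF act_mul -{1}F_idem act_mul F_psis (lin_sum (act_lin a)).
by apply: eq_bigr => k _; rewrite (linZ (act_lin a)) nth_mkseq // (nth_map 0).
Qed.

Lemma act_in_End0_B a : in_End0_B mul actG (actG a).
Proof. by split=> [|S [_ S_act] xi]; [exact: act_in_End0 | rewrite S_act]. Qed.

Lemma act_faithful a : (forall xi, actG a xi = 0) -> a = 0.
Proof.
move=> a0; have [F [F_idem [F_unit _]]] := units [:: a].
have [_ <-] := F_unit a (mem_head _ _).
have [fs [fs_hom [gs ->]]] :=
  proj_generator_covers_idempotent mul_alg F_idem left_units G_gen.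
rewrite (mul_sumr mul_alg); apply: big1 => k _.
by have [f_lin f_act] := fs_hom k (ltn_ord k); rewrite -f_act a0 (lin0 f_lin).
Qed.

Lemma act_inj a a' : (forall xi, actG a xi = actG a' xi) -> a = a'.
Proof.
move=> eq_act; apply/eqP; rewrite -subr_eq0; apply/eqP/act_faithful => xi.
by rewrite (linB (act_linl xi)) eq_act subrr.
Qed.

Lemma End0_right_unit T : in_End0 mul actG T ->
  exists F, Defs.idempotent mul F /\ forall eta, T (actG F eta) = T eta.
Proof.
move=> [_ [phis [xis [_ [phis_dual T_rep]]]]].
set phi := nth (fun _ => 0) phis in phis_dual T_rep.
have phi_unit k : exists e, (k < size phis)%N ->
    forall eta, phi k (actG e eta) = phi k eta.
  case: (ltnP k (size phis)) => [/phis_dual [_ [e [_ eP]]] | _]; first by exists e.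
  by exists 0.
have [u uP] := choice phi_unit.
have [F [F_idem [F_unit _]]] := units (mkseq u (size phis)).
exists F; split=> // eta; rewrite !T_rep; apply: eq_bigr => k _.
have uk : u k \in mkseq u (size phis).
  by rewrite -(nth_mkseq 0 u (ltn_ord k)) mem_nth ?size_mkseq.
have [_ ukF] := F_unit _ uk.
by rewrite -(uP k (ltn_ord k) (actG F eta)) -act_mul ukF (uP k (ltn_ord k)).
Qed.

Lemma End0_B_is_act T : in_End0_B mul actG T -> exists a, forall xi, T xi = actG a xi.
Proof.
move=> [T_End0 T_B]; have [T_lin _] := T_End0.
have [F [F_idem TF]] := End0_right_unit T_End0.
have [fs [fs_hom [gs F_gs]]] :=
  proj_generator_covers_idempotent mul_alg F_idem left_units G_gen.
exists (\sum_(k < size fs) nth (fun _ => 0) fs k (T gs`_k)) => xi.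
rewrite -TF F_gs (lin_sum (act_linl xi)) (lin_sum T_lin) (lin_sum (act_linl xi)).
apply: eq_bigr => k _; have [f_lin f_act] := fs_hom k (ltn_ord k).
pose S g := actG (nth (fun _ => 0) fs k g) xi.
have S_hom : modhom actG actG S.
  by split=> [c x y | b g]; rewrite /S ?f_lin ?(act_linl xi) ?f_act ?act_mul.
exact: T_B S S_hom gs`_k.
Qed.

End Representation.

Theorem theorem11p7 (R : realType) (A : lmodType (complex R)) (mul : A -> A -> A)
    (G : lmodType (complex R)) (actG : A -> G -> G) :
  nu_alg mul -> strongly_AUF mul -> is_lmod mul actG -> proj_generator mul actG ->
  (* a |-> (left multiplication by a) is linear, *)
  (forall (c : complex R) (a a' : A) (xi : G),
      actG (c *: a + a') xi = c *: actG a xi + actG a' xi) /\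
  (* lands in End^0_{-,B}(G), *)
  (forall a : A, in_End0_B mul actG (actG a)) /\
  (* is injective, *)
  (forall a a' : A, (forall xi, actG a xi = actG a' xi) -> a = a') /\
  (* and is surjective onto End^0_{-,B}(G). *)
  (forall T : G -> G, in_End0_B mul actG T -> exists a : A, forall xi, T xi = actG a xi).
Proof.
move=> mul_alg [A_AUF _] actG_lmod G_gen.
have units := AUF_fd_local_units mul_alg A_AUF.
split; first by move=> c a a' xi; rewrite (act_linl actG_lmod xi).
split; first exact: (act_in_End0_B units actG_lmod G_gen).
split; first by move=> a a'; apply: (act_inj mul_alg units actG_lmod G_gen).
by move=> T; apply: (End0_B_is_act mul_alg units actG_lmod G_gen).
Qed.
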